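(* Let $R$ be a non-zero commutative ring and $(A,G)\in\mathcal{D}(R)$. If $(A,G)$ is a maximal element of $\mathcal{D}(R)$, then $A$ is stark. If $R$ is a connected order, the converse also holds: if $A$ is stark then $(A,G)$ is maximal in $\mathcal{D}(R)$.
   Context: All rings have a unit element. For a commutative ring $R$, $\mathcal{D}(R)$ is the set of pairs $(A,G)$ with $A\subset R$ a subring and $G\subset R^*$ a subgroup such that the natural map from the group ring $A[G]$ to $R$ is a ring isomorphism, partially ordered by $(B,H)\leq(A,G)$ iff $H\subset G$ and $B\supset A$. A commutative ring is stark if there do not exist a ring $B$ and a non-trivial group $H$ with it isomorphic to $B[H]$. An order is a commutative ring whose additive group is isomorphic to $\mathbb{Z}^n$ for some $n\ge 0$; it is connected if it has exactly two idempotents. *)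

From HB Require Import structures.
From mathcomp Require Import all_boot all_order all_algebra.
From Stdlib Require List.
Set Implicit Arguments.
Unset Strict Implicit.
Unset Printing Implicit Defensive.
Import Order.TTheory GRing.Theory Num.Theory.
Local Open Scope ring_scope.

Definition unit_subgroup (R : comNzRingType) (G : pred R) : Prop :=
  [/\ {in G, forall x, exists y : R, x * y = 1}, 1 \in G,
      {in G &, forall x y, x * y \in G} &
      {in G, forall x, exists2 y : R, y \in G & x * y = 1}].

(* The natural map A[G] -> R, sum_g a_g [g] |-> sum_g a_g g, is bijective.
   An element of A[G] is given by a duplicate-free list s of elements of G
   (containing its support) and coefficients c g in A. *)
Definition natmap_surj (R : comNzRingType) (A G : pred R) : Prop :=
  forall r : R, exists (s : seq R) (c : R -> R),
    [/\ {subset s <= G}, {in s, forall g, c g \in A} &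
        r = \sum_(g <- s) c g * g].

Definition natmap_inj (R : comNzRingType) (A G : pred R) : Prop :=
  forall (s : seq R) (c : R -> R), uniq s -> {subset s <= G} ->
    {in s, forall g, c g \in A} ->
    \sum_(g <- s) c g * g = 0 -> {in s, forall g, c g = 0}.

Definition inD (R : comNzRingType) (A G : pred R) : Prop :=
  [/\ GRing.subring_closed A, unit_subgroup G,
      natmap_surj A G & natmap_inj A G].

(* (B, H) <= (A, G)  iff  H \subset G and B \supset A *)
Definition leD (R : comNzRingType) (B H A G : pred R) : Prop :=
  {subset H <= G} /\ {subset A <= B}.

Definition maximalD (R : comNzRingType) (A G : pred R) : Prop :=
  inD A G /\
  forall B H : pred R, inD B H -> leD A G B H -> (B =i A /\ H =i G).

Record group_on (H : Type) := GroupOn {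
  gmul : H -> H -> H;
  gone : H;
  ginv : H -> H;
  gmulA : forall x y z, gmul x (gmul y z) = gmul (gmul x y) z;
  gmul1 : forall x, gmul gone x = x;
  gmulV : forall x, gmul (ginv x) x = gone
}.

(* The ring S (a subring of T, given as a predicate; S = T when S = predT)
   is isomorphic to the group ring B[H]: there are a ring morphism f : B -> T
   and a group morphism j : H -> T, both with values in S, such that the
   induced map B[H] -> S, sum_h b_h [h] |-> sum_h f(b_h) j(h), is bijective.
   An element of B[H] is given by a duplicate-free list l of elements of H
   (containing its support) and coefficients c : H -> B. *)
Definition group_ring_iso (T : nzRingType) (S : pred T)
    (B : nzRingType) (H : Type) (g : group_on H)
    (f : {rmorphism B -> T}) (j : H -> T) : Prop :=
  [/\ (forall b, f b \in S), (forall h, j h \in S),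
      (forall x y, j (gmul g x y) = j x * j y) /\ j (gone g) = 1,
      (forall t, t \in S -> exists (l : seq H) (c : H -> B),
          t = \sum_(h <- l) f (c h) * j h) &
      (forall (l : seq H) (c : H -> B), List.NoDup l ->
          \sum_(h <- l) f (c h) * j h = 0 -> forall h, List.In h l -> c h = 0)].

Definition stark_in (T : nzRingType) (S : pred T) : Prop :=
  ~ exists (B : nzRingType) (H : Type) (g : group_on H)
           (f : {rmorphism B -> T}) (j : H -> T),
      (exists h : H, h <> gone g) /\ group_ring_iso S g f j.

Definition stark (T : nzRingType) : Prop := stark_in (@predT T).

Definition is_order (R : comNzRingType) : Prop :=
  exists (n : nat) (phi : {additive 'rV[int]_n -> R}), bijective phi.

Definition connected_ring (R : comNzRingType) : Prop :=
  exists x y : R, [/\ x <> y, x * x = x, y * y = y &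
    forall e : R, e * e = e -> e = x \/ e = y].

(* Write R = A[G].  If A = B[K] with K nontrivial, then R = B[K G]: the
   products k g are independent over B because A[G] -> R is injective, and
   K meets G trivially inside A.  So (B, K G) lies strictly above (A, G).
   Conversely, let (B, H) lie above (A, G).  The augmentation A[G] -> A that
   sends every g in G to 1 is a ring retraction of R onto A, and an element
   of R = B[H] in its kernel has coefficient sum 0 on every coset of G in H.
   Hence A = B[K] for K the image of H, a group isomorphic to H/G.
   Starkness of A forces H = G, and comparing coefficients at 1 gives B = A. *)

From HB Require Import structures.
From mathcomp Require Import all_boot all_order all_algebra.
From mathcomp Require Import boolp.
From Stdlib Require List.
Set Implicit Arguments.
Unset Strict Implicit.
Unset Printing Implicit Defensive.
Import GRing.Theory.
Local Open Scope ring_scope.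

Lemma InP (T : eqType) (x : T) (s : seq T) : reflect (List.In x s) (x \in s).
Proof.
elim: s => [|y s IH] /=; first by constructor.
rewrite in_cons; apply: (iffP orP) => [[/eqP->|/IH]|[->|/IH]]; by [left | right].
Qed.

Lemma NoDupP (T : eqType) (s : seq T) : reflect (List.NoDup s) (uniq s).
Proof.
elim: s => [|x s IH] /=; first by do !constructor.
apply: (iffP andP) => [[/InP xs /IH us]|nd]; first by constructor.
by inversion nd; split; [apply/InP | apply/IH].
Qed.

Lemma mem_map_In (T : Type) (U : eqType) (g : T -> U) (l : seq T) y :
  y \in map g l -> exists2 x, List.In x l & y = g x.
Proof.
elim: l => //= x l IH; rewrite in_cons => /orP[/eqP->|/IH[z zl ->]].
  by exists x; first left.
by exists z; first right.
Qed.

Lemma uniq_map_NoDup (T : Type) (U : eqType) (g : T -> U) (l : seq T) :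
  uniq (map g l) -> List.NoDup l.
Proof.
elim: l => [|x l IH] /=; first by constructor.
case/andP=> gxl ul; constructor; last exact: IH.
by move=> xl; case/negP: gxl; elim: l xl {IH ul} => //= y l IHl [->|/IHl];
  rewrite in_cons ?eqxx // => ->; rewrite orbT.
Qed.

Lemma map_lift (T : eqType) (U : Type) (g : U -> T) (Q : pred U) (s : seq T) :
  {in s, forall x, exists2 u, Q u & g u = x} -> exists2 t, all Q t & map g t = s.
Proof.
elim: s => [|x s IH] hs; first by exists [::].
have [u Qu <-] := hs x (mem_head _ _).
have [t Qt <-] : exists2 t, all Q t & map g t = s.
  by apply: IH => y ys; apply: hs; rewrite in_cons ys orbT.
by exists (u :: t); rewrite /= ?Qu.
Qed.

Lemma big_pred1_uniq (V : nmodType) (I : eqType) (r : seq I) (i : I) (F : I -> V) :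
  uniq r -> i \in r -> \sum_(k <- r | k == i) F k = F i.
Proof. by move=> ur ir; rewrite -big_filter filter_pred1_uniq // big_seq1. Qed.

Lemma big_undup_partition (V : nmodType) (I K : eqType) (key : I -> K) (F : I -> V)
    (r : seq I) :
  \sum_(i <- r) F i = \sum_(k <- undup (map key r)) \sum_(i <- r | key i == k) F i.
Proof.
under [RHS]eq_bigr => k _ do rewrite big_mkcond.
rewrite exchange_big /=; apply: eq_big_seq => i ir.
rewrite -big_mkcond /=; under eq_bigl => k do rewrite eq_sym.
by rewrite big_pred1_uniq ?undup_uniq // mem_undup map_f.
Qed.

Section SubringClosed.
Variables (R : comNzRingType) (S : pred R) (hS : GRing.subring_closed S).

Lemma subring_closed_one : 1 \in S. Proof. by case: hS. Qed.
Lemma subring_closed_mul : {in S &, forall x y, x * y \in S}. Proof. by case: hS. Qed.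
Lemma subring_closed_opp : {in S, forall x, - x \in S}.
Proof. exact: GRing.zmod_closedN (GRing.subring_closedB hS). Qed.
Lemma subring_closed_sum (I : Type) (r : seq I) (P : pred I) (F : I -> R) :
  (forall i, P i -> F i \in S) -> \sum_(i <- r | P i) F i \in S.
Proof.
have [[S0 SD] _] := GRing.subring_closed_semi hS.
by move=> SF; apply: (big_ind (fun x => x \in S)).
Qed.

End SubringClosed.

Section UnitSubgroups.
Variable R : comNzRingType.
Implicit Types (G J U : pred R).

Lemma unit_subgroup1 U : unit_subgroup U -> 1 \in U.
Proof. by case. Qed.

Lemma unit_subgroupM U : unit_subgroup U -> {in U &, forall x y, x * y \in U}.
Proof. by case. Qed.

Lemma unit_subgroupV U : unit_subgroup U ->
  {in U, forall x, exists2 y, y \in U & x * y = 1}.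
Proof. by case. Qed.

Lemma unit_subgroup_of_inv U : 1 \in U -> {in U &, forall x y, x * y \in U} ->
  {in U, forall x, exists2 y, y \in U & x * y = 1} -> unit_subgroup U.
Proof. by move=> U1 UM UV; split=> // x /UV[y _ xy]; exists y. Qed.

Definition image_pred (T : Type) (h : T -> R) (D : pred T) : pred R :=
  fun x => `[< exists2 t, t \in D & x = h t >].

Lemma image_predP (T : Type) (h : T -> R) (D : pred T) x :
  reflect (exists2 t, t \in D & x = h t) (x \in image_pred h D).
Proof. exact: asboolP. Qed.

Definition mul_pred J G : pred R :=
  fun x => `[< exists2 y, y \in J & exists2 u, u \in G & x = y * u >].

Lemma mul_predP J G x :
  reflect (exists2 y, y \in J & exists2 u, u \in G & x = y * u) (x \in mul_pred J G).
Proof. exact: asboolP. Qed.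

Lemma mul_pred_subr J G : 1 \in J -> {subset G <= mul_pred J G}.
Proof. by move=> J1 u uG; apply/mul_predP; exists 1 => //; exists u; rewrite ?mul1r. Qed.

Lemma mul_pred_subl J G : 1 \in G -> {subset J <= mul_pred J G}.
Proof. by move=> G1 y yJ; apply/mul_predP; exists y => //; exists 1; rewrite ?mulr1. Qed.

Lemma unit_subgroup_mul_pred J G :
  unit_subgroup J -> unit_subgroup G -> unit_subgroup (mul_pred J G).
Proof.
move=> hJ hG; apply: unit_subgroup_of_inv.
- exact: mul_pred_subl (unit_subgroup1 hG) _ (unit_subgroup1 hJ).
- move=> _ _ /mul_predP[y1 y1J [u1 u1G ->]] /mul_predP[y2 y2J [u2 u2G ->]].
  apply/mul_predP; exists (y1 * y2); first exact: unit_subgroupM.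
  by exists (u1 * u2); rewrite ?(unit_subgroupM hG) // mulrACA.
- move=> _ /mul_predP[y yJ [u uG ->]].
  have [y' y'J yy'] := unit_subgroupV hJ yJ; have [u' u'G uu'] := unit_subgroupV hG uG.
  exists (y' * u'); last by rewrite mulrACA yy' uu' mulr1.
  by apply/mul_predP; exists y' => //; exists u'.
Qed.

Section UnitSubgroupType.
Variables (U : pred R) (hU : unit_subgroup U).

Definition unit_sub := {x : R | x \in U}.

Lemma unit_sub_valP (x : unit_sub) : val x \in U.
Proof. exact: valP. Qed.

Lemma unit_sub_inv_ex (x : unit_sub) : exists y, (y \in U) && (val x * y == 1).
Proof. by have [y yU xy] := unit_subgroupV hU (unit_sub_valP x); exists y; rewrite yU xy eqxx. Qed.

Definition unit_sub_one : unit_sub := exist _ 1 (unit_subgroup1 hU).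
Definition unit_sub_mul (x y : unit_sub) : unit_sub :=
  exist _ (val x * val y) (unit_subgroupM hU (unit_sub_valP x) (unit_sub_valP y)).
Definition unit_sub_inv (x : unit_sub) : unit_sub :=
  exist _ (xchoose (unit_sub_inv_ex x)) (proj1 (andP (xchooseP (unit_sub_inv_ex x)))).

Lemma unit_sub_mulA : associative unit_sub_mul.
Proof. by move=> x y z; apply: val_inj; rewrite /= mulrA. Qed.

Lemma unit_sub_mul1 : left_id unit_sub_one unit_sub_mul.
Proof. by move=> x; apply: val_inj; rewrite /= mul1r. Qed.

Lemma unit_sub_mulV : left_inverse unit_sub_one unit_sub_inv unit_sub_mul.
Proof.
move=> x; apply: val_inj => /=; rewrite mulrC.
by have /andP[_ /eqP] := xchooseP (unit_sub_inv_ex x).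
Qed.

Definition unit_sub_group : group_on unit_sub :=
  GroupOn unit_sub_mulA unit_sub_mul1 unit_sub_mulV.

End UnitSubgroupType.
End UnitSubgroups.

Lemma image_pred_unit_subgroup (R S : comNzRingType) (f : {rmorphism S -> R}) (H : pred S) :
  unit_subgroup H -> unit_subgroup (image_pred f H).
Proof.
move=> hH; apply: unit_subgroup_of_inv.
- by apply/image_predP; exists 1; rewrite ?rmorph1 ?(unit_subgroup1 hH).
- move=> _ _ /image_predP[x xH ->] /image_predP[y yH ->].
  by apply/image_predP; exists (x * y); rewrite ?rmorphM ?(unit_subgroupM hH).
- move=> _ /image_predP[x xH ->]; have [y yH xy] := unit_subgroupV hH xH.
  by exists (f y); [apply/image_predP; exists y | rewrite -rmorphM xy rmorph1].
Qed.

Definition coset_closed (R : comNzRingType) (G C : pred R) :=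
  forall h u, u \in G -> C (h * u) = C h.

Lemma unit_subgroup_coset_closed (R : comNzRingType) (G : pred R) :
  unit_subgroup G -> coset_closed G (fun x => x \in G).
Proof.
move=> hG x u uG; apply/idP/idP => [xuG|xG]; last exact: unit_subgroupM.
have [v vG uv] := unit_subgroupV hG uG.
by rewrite -[x]mulr1 -uv mulrA (unit_subgroupM hG).
Qed.

Section PairLists.
Variable R : comNzRingType.
Implicit Types (A G C : pred R) (L : seq (R * R)).

Definition pairs_in A G L := all (fun p => (p.1 \in A) && (p.2 \in G)) L.
Definition pair_sum L := \sum_(p <- L) p.1 * p.2.
Definition pair_coef C L := \sum_(p <- L | C p.2) p.1.
Definition pairs_opp L := [seq (- p.1, p.2) | p <- L].
Definition pair_spans A G (S : pred R) :=
  forall r, r \in S -> exists2 L, pairs_in A G L & r = pair_sum L.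

Definition pairs_mulr L u := [seq (p.1, p.2 * u) | p <- L].

Lemma pairs_inP A G L :
  reflect {in L, forall p, p.1 \in A /\ p.2 \in G} (pairs_in A G L).
Proof. by apply: (iffP allP) => h p /h /andP. Qed.

Lemma pairs_in_cat A G L1 L2 :
  pairs_in A G (L1 ++ L2) = pairs_in A G L1 && pairs_in A G L2.
Proof. exact: all_cat. Qed.

Lemma pairs_in_opp A G L :
  GRing.subring_closed A -> pairs_in A G L -> pairs_in A G (pairs_opp L).
Proof.
move=> hA /pairs_inP hL; apply/pairs_inP => _ /mapP[p pL ->] /=.
by have [pA pG] := hL p pL; rewrite subring_closed_opp.
Qed.

Lemma pairs_in_cons A G p L :
  pairs_in A G (p :: L) = [&& p.1 \in A, p.2 \in G & pairs_in A G L].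
Proof. by rewrite /pairs_in /= andbA. Qed.

Lemma pair_sum_cons p L : pair_sum (p :: L) = p.1 * p.2 + pair_sum L.
Proof. exact: big_cons. Qed.

Lemma pair_sum_cat L1 L2 : pair_sum (L1 ++ L2) = pair_sum L1 + pair_sum L2.
Proof. exact: big_cat. Qed.

Lemma pair_coef_cat C L1 L2 : pair_coef C (L1 ++ L2) = pair_coef C L1 + pair_coef C L2.
Proof. exact: big_cat. Qed.

Lemma pair_sum_opp L : pair_sum (pairs_opp L) = - pair_sum L.
Proof. by rewrite /pair_sum big_map -sumrN; apply: eq_bigr => p _; rewrite mulNr. Qed.

Lemma pair_coef_opp C L : pair_coef C (pairs_opp L) = - pair_coef C L.
Proof. by rewrite /pair_coef big_map sumrN. Qed.

Lemma pair_sum_mulr L u : pair_sum (pairs_mulr L u) = pair_sum L * u.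
Proof. by rewrite /pair_sum big_map mulr_suml; apply: eq_bigr => p _; rewrite mulrA. Qed.

Lemma pair_coef_mulr C L u :
  pair_coef C (pairs_mulr L u) = pair_coef [pred h | C (h * u)] L.
Proof. exact: big_map. Qed.

Lemma pair_coef_partition C L :
  pair_coef C L = \sum_(g <- undup (map snd L) | C g) pair_coef (pred1 g) L.
Proof.
rewrite /pair_coef big_mkcond (big_undup_partition snd) [RHS]big_mkcond.
apply: eq_bigr => g _; case: (boolP (C g)) => Cg.
  by apply: eq_bigr => p /eqP ->; rewrite Cg.
by apply: big1 => p /eqP ->; rewrite (negbTE Cg).
Qed.

Lemma pair_sum_partition L :
  pair_sum L = \sum_(g <- undup (map snd L)) pair_coef (pred1 g) L * g.
Proof.
rewrite /pair_sum (big_undup_partition snd); apply: eq_bigr => g _.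
by rewrite mulr_suml; apply: eq_bigr => p /eqP ->.
Qed.

Lemma pair_spans_surj A G :
  GRing.subring_closed A -> pair_spans A G predT -> natmap_surj A G.
Proof.
move=> hA hspan r; have [L /pairs_inP hL ->] := hspan r isT.
exists (undup (map snd L)), (fun g => pair_coef (pred1 g) L); split.
- by move=> g; rewrite mem_undup => /mapP[p pL ->]; have [] := hL p pL.
- move=> g _; rewrite /pair_coef big_seq_cond.
  by apply: subring_closed_sum => // p /andP[pL _]; have [] := hL p pL.
- exact: pair_sum_partition.
Qed.

Lemma pairs_in_sub A G A' G' L : {subset A <= A'} -> {subset G <= G'} ->
  pairs_in A G L -> pairs_in A' G' L.
Proof.
move=> AA' GG' /pairs_inP hL; apply/pairs_inP => p /hL[pA pG].
by rewrite AA' ?GG'.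
Qed.

Lemma pairs_in_keys A G L : pairs_in A G L -> {subset undup (map snd L) <= G}.
Proof. by move=> /pairs_inP hL g; rewrite mem_undup => /mapP[p /hL[_ pG] ->]. Qed.

Lemma pair_coef_in A G C L :
  GRing.subring_closed A -> pairs_in A G L -> pair_coef C L \in A.
Proof.
move=> hA /pairs_inP hL; rewrite /pair_coef big_seq_cond.
by apply: subring_closed_sum => // p /andP[/hL[]].
Qed.

Lemma natmap_surj_spans A G : natmap_surj A G -> pair_spans A G predT.
Proof.
move=> hs r _; have [s [c [sG cA ->]]] := hs r.
exists [seq (c g, g) | g <- s]; last by rewrite /pair_sum big_map.
by apply/pairs_inP => _ /mapP[g gs ->]; split; [exact: cA | exact: sG].
Qed.

Lemma natmap_inj_coef A G C L : GRing.subring_closed A -> natmap_inj A G ->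
  pairs_in A G L -> pair_sum L = 0 -> pair_coef C L = 0.
Proof.
move=> hA hi hL L0.
have coef0 : {in undup (map snd L), forall g, pair_coef (pred1 g) L = 0}.
  apply: hi; rewrite ?undup_uniq -?pair_sum_partition //; first exact: pairs_in_keys hL.
  by move=> g _; apply: pair_coef_in hL.
by rewrite pair_coef_partition big_seq_cond big1 // => g /andP[/coef0].
Qed.

Lemma inD_subring A G : inD A G -> GRing.subring_closed A.
Proof. by case. Qed.

Lemma inD_unit_subgroup A G : inD A G -> unit_subgroup G.
Proof. by case. Qed.

Lemma inD_spans A G : inD A G -> pair_spans A G predT.
Proof. by case=> _ _ hs _; apply: natmap_surj_spans. Qed.

Lemma inD_coef A G C L :
  inD A G -> pairs_in A G L -> pair_sum L = 0 -> pair_coef C L = 0.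
Proof. by case=> hA _ _ hi; apply: natmap_inj_coef. Qed.

Lemma inD_eq1 A G y : inD A G -> y \in A -> y \in G -> y = 1.
Proof.
move=> AG yA yG; apply/eqP/negPn/negP => ny1.
have hA := inD_subring AG; have G1 := unit_subgroup1 (inD_unit_subgroup AG).
have := inD_coef (pred1 y) AG (L := [:: (1, y); (- y, 1)]).
rewrite /pairs_in /= yG G1 subring_closed_one ?(subring_closed_opp hA) //.
rewrite /pair_sum /pair_coef !big_cons !big_nil /= eqxx eq_sym (negbTE ny1).
by rewrite mul1r mulr1 addr0 subrr addr0 => /(_ isT erefl) /eqP; rewrite oner_eq0.
Qed.

Lemma inD_ring_sub A G B H : inD A G -> inD B H ->
  {subset H <= G} -> {subset B <= A} -> {subset A <= B}.
Proof.
move=> AG BH HG BA a aA; have [L hL ea] := inD_spans BH (r := a) isT.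
have G1 := unit_subgroup1 (inD_unit_subgroup AG).
have hP : pairs_in A G ((a, 1) :: pairs_opp L).
  by rewrite /= aA G1 (pairs_in_opp (inD_subring AG) (pairs_in_sub BA HG hL)).
have := inD_coef (pred1 1) AG hP.
rewrite /pair_sum big_cons -/(pair_sum _) pair_sum_opp -ea mulr1 subrr => /(_ erefl).
rewrite /pair_coef big_cons /= eqxx -/(pair_coef (pred1 1) _) pair_coef_opp => /eqP.
by rewrite subr_eq0 => /eqP ->; apply: pair_coef_in (inD_subring BH) hL.
Qed.

End PairLists.

Lemma image_rmorph_subring_closed (R : comNzRingType) (B : nzRingType)
    (f : {rmorphism B -> R}) : GRing.subring_closed (image_pred f predT).
Proof.
split; first by apply/image_predP; exists 1; rewrite ?rmorph1.
- move=> _ _ /image_predP[a _ ->] /image_predP[b _ ->].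
  by apply/image_predP; exists (a - b); rewrite ?rmorphB.
- move=> _ _ /image_predP[a _ ->] /image_predP[b _ ->].
  by apply/image_predP; exists (a * b); rewrite ?rmorphM.
Qed.

Section GroupRingIso.
Variables (R : comNzRingType) (S : pred R) (B : nzRingType) (K : Type).
Variables (gK : group_on K) (f : {rmorphism B -> R}) (j : K -> R).
Hypothesis iso : group_ring_iso S gK f j.

Lemma group_ring_iso_inj : injective j.
Proof.
case: iso => _ _ _ _ indep x y jxy; case: (pselect (x = y)) => // nxy.
pose c k : B := if `[< k = x >] then 1 else -1.
have cx : c x = 1 by rewrite /c asboolT.
have cy : c y = -1 by rewrite /c asboolF // => /esym.
have nd : List.NoDup [:: x; y].
  by do !constructor => //; case=> // /esym.
have := indep _ c nd; rewrite !big_cons big_nil cx cy rmorph1 rmorphN1 jxy.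
rewrite mul1r mulN1r addr0 subrr => /(_ erefl x (or_introl erefl)).
by rewrite cx => /eqP; rewrite oner_eq0.
Qed.

Lemma group_ring_iso_unit_subgroup : unit_subgroup (image_pred j predT).
Proof.
case: iso => _ _ [jM j1] _ _; apply: unit_subgroup_of_inv.
- by apply/image_predP; exists (gone gK).
- move=> _ _ /image_predP[k _ ->] /image_predP[l _ ->].
  by apply/image_predP; exists (gmul gK k l).
- move=> _ /image_predP[k _ ->]; exists (j (ginv gK k)).
    by apply/image_predP; exists (ginv gK k).
  by rewrite mulrC -jM gmulV.
Qed.

Lemma group_ring_iso_coef_sub : {subset image_pred f predT <= S}.
Proof. by case: iso => fS _ _ _ _ _ /image_predP[b _ ->]. Qed.

Lemma group_ring_iso_basis_sub : {subset image_pred j predT <= S}.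
Proof. by case: iso => _ jS _ _ _ _ /image_predP[k _ ->]. Qed.

Lemma group_ring_iso_spans : pair_spans (image_pred f predT) (image_pred j predT) S.
Proof.
case: iso => _ _ _ span _ t /span[l [c ->]].
exists [seq (f (c k), j k) | k <- l]; last by rewrite /pair_sum big_map.
rewrite /pairs_in all_map; apply: sub_all (all_predT l) => k _ /=.
by apply/andP; split; apply/image_predP; eexists.
Qed.

Lemma group_ring_iso_natmap_inj : natmap_inj (image_pred f predT) (image_pred j predT).
Proof.
case: iso => _ _ _ _ indep s c us sJ cF sum0.
have [T _ eT] : exists2 T, all predT T &
    [seq (f t.1, j t.2) | t : B * K <- T] = [seq (c y, y) | y <- s].
  apply: map_lift => _ /mapP[y ys ->].
  have /image_predP[b _ eb] := cF y ys; have /image_predP[k _ ek] := sJ y ys.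
  by exists (b, k); rewrite //= -eb -ek.
set l := map snd T.
have el : map j l = s.
  by move: (congr1 (map snd) eT); rewrite /l -!map_comp => ->; apply: map_id_in.
(* Summing over the lift avoids choosing preimages under [f]. *)
pose d y := \sum_(t <- T | j t.2 == y) t.1.
have fd y : y \in s -> f (d y) = c y.
  move=> ys; rewrite rmorph_sum -(big_map (fun t => (f t.1, j t.2)) (fun p => p.2 == y) fst).
  by rewrite eT big_map big_pred1_uniq.
have nd : List.NoDup l by apply: (@uniq_map_NoDup _ R j); rewrite el.
have d0 := indep l (fun k => d (j k)) nd.
have sum_s : \sum_(y <- s) f (d y) * y = 0.
  by rewrite -[RHS]sum0; apply: eq_big_seq => y /fd ->.
have sum_d : \sum_(k <- l) f (d (j k)) * j k = 0.
  by rewrite -[RHS]sum_s -el [RHS]big_map.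
move=> y ys; have [k kl yk] : exists2 k, List.In k l & y = j k.
  by apply: mem_map_In; rewrite el.
by rewrite -fd // yk (d0 sum_d k kl : d (j k) = 0) rmorph0.
Qed.

End GroupRingIso.

Section GroupRingTower.
Variables (R : comNzRingType) (A G F J : pred R).
Hypotheses (AG : inD A G) (hF : GRing.subring_closed F) (hJ : unit_subgroup J).
Hypotheses (FA : {subset F <= A}) (JA : {subset J <= A}).
Hypotheses (spanFJ : pair_spans F J A) (injFJ : natmap_inj F J).

Lemma tower_spans : pair_spans F (mul_pred J G) predT.
Proof.
move=> r _; have [L hL ->] := inD_spans AG (r := r) isT.
elim: L hL => [|[a u] L IH]; first by exists [::].
rewrite pairs_in_cons pair_sum_cons => /and3P[/= aA uG /IH[L' hL' ->]] /=.
have [M hM ->] := spanFJ aA.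
exists (pairs_mulr M u ++ L'); last by rewrite pair_sum_cat pair_sum_mulr.
rewrite pairs_in_cat hL' andbT; apply/pairs_inP => _ /mapP[p pM ->] /=.
have [pF pJ] := pairs_inP _ _ _ hM p pM.
by split=> //; apply/mul_predP; exists p.2 => //; exists u.
Qed.

Section TowerFibres.
Variables (s : seq R) (c : R -> R) (T : seq (R * R * R)).
Hypotheses (us : uniq s) (sum0 : \sum_(x <- s) c x * x = 0).
Hypothesis hT : all (fun t => [&& t.1.1 \in F, t.1.2 \in J & t.2 \in G]) T.
Hypothesis eT : [seq (t.1.1, t.1.2 * t.2) | t <- T] = [seq (c x, x) | x <- s].

Let fibre u := [seq t.1.2 | t <- T & t.2 == u].

Lemma tower_coefE t : t \in T -> c (t.1.2 * t.2) = t.1.1.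
Proof.
move=> tT; have /mapP[x _ [-> ->]] // : (t.1.1, t.1.2 * t.2) \in [seq (c x, x) | x <- s].
by rewrite -eT map_f.
Qed.

Lemma tower_fibre_sum u : \sum_(y <- fibre u) c (y * u) * y = 0.
Proof.
have hP : pairs_in A G [seq (t.1.1 * t.1.2, t.2) | t <- T].
  apply/pairs_inP => _ /mapP[t tT ->] /=; have /and3P[tF tJ tG] := allP hT t tT.
  by split=> //; apply: (subring_closed_mul (inD_subring AG)); [exact: FA | exact: JA].
have sumP : pair_sum [seq (t.1.1 * t.1.2, t.2) | t <- T] = 0.
  have : pair_sum [seq (c x, x) | x <- s] = 0 by rewrite /pair_sum big_map.
  rewrite -eT /pair_sum !big_map => h; rewrite -[RHS]h.
  by apply: eq_bigr => t _; rewrite mulrA.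
have := inD_coef (pred1 u) AG hP sumP; rewrite /pair_coef big_map => h; rewrite -[RHS]h.
rewrite big_map big_filter big_seq_cond [RHS]big_seq_cond.
by apply: eq_bigr => t /andP[tT /eqP tu]; rewrite -tu tower_coefE.
Qed.

Lemma tower_fibre_uniq u : uniq (fibre u).
Proof.
have eTs : [seq t.1.2 * t.2 | t <- T] = s.
  by move: (congr1 (map snd) eT); rewrite -!map_comp => ->; apply: map_id_in.
apply: (@map_uniq _ _ (fun y => y * u)).
have -> : [seq y * u | y <- fibre u] = [seq t.1.2 * t.2 | t <- T & t.2 == u].
  rewrite -map_comp; apply/eq_in_map => t.
  by rewrite mem_filter => /andP[/eqP tu _] /=; rewrite tu.
by apply: subseq_uniq (map_subseq _ (filter_subseq _ _)) _; rewrite eTs.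
Qed.

Lemma tower_coef_eq0 t : t \in T -> t.1.1 = 0.
Proof.
move=> tT; have fibreJ : {subset fibre t.2 <= J}.
  move=> y /mapP[t']; rewrite mem_filter => /andP[_ /(allP hT)/and3P[_ t'J _]] ->.
  exact: t'J.
have fibreF : {in fibre t.2, forall y, c (y * t.2) \in F}.
  move=> y /mapP[t']; rewrite mem_filter => /andP[/eqP <- t'T] ->.
  by rewrite tower_coefE //; case/and3P: (allP hT t' t'T).
rewrite -tower_coefE // (injFJ (tower_fibre_uniq t.2) fibreJ fibreF (tower_fibre_sum t.2)) //.
by apply/mapP; exists t; rewrite // mem_filter eqxx.
Qed.

End TowerFibres.

Lemma tower_natmap_inj : natmap_inj F (mul_pred J G).
Proof.
move=> s c us sJG cF sum0 x0 x0s.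
have [T hT eT] : exists2 T, all (fun t => [&& t.1.1 \in F, t.1.2 \in J & t.2 \in G]) T &
    [seq (t.1.1, t.1.2 * t.2) | t : R * R * R <- T] = [seq (c x, x) | x <- s].
  apply: map_lift => _ /mapP[x xs ->].
  have [y yJ [u uG xe]] := mul_predP _ _ _ (sJG x xs).
  by exists (c x, y, u); rewrite /= ?cF ?yJ ?uG -?xe.
have /mapP[t tT [-> _]] : (c x0, x0) \in [seq (t.1.1, t.1.2 * t.2) | t <- T].
  by rewrite eT map_f.
exact: (tower_coef_eq0 us sum0 hT eT tT).
Qed.

Lemma inD_tower : inD F (mul_pred J G).
Proof.
split=> //; first exact: unit_subgroup_mul_pred (inD_unit_subgroup AG).
  exact: pair_spans_surj tower_spans.
exact: tower_natmap_inj.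
Qed.

End GroupRingTower.

Lemma maximalD_stark (R : comNzRingType) (A G : pred R) : maximalD A G -> stark_in A.
Proof.
case=> AG maxAG [B [K [gK [f [j [[k nk] iso]]]]]]; apply: nk.
have hJ := group_ring_iso_unit_subgroup iso.
have [_ JG_G] := maxAG _ _ (inD_tower AG (image_rmorph_subring_closed f) hJ
  (group_ring_iso_coef_sub iso) (group_ring_iso_basis_sub iso)
  (group_ring_iso_spans iso) (group_ring_iso_natmap_inj iso))
  (conj (mul_pred_subr (unit_subgroup1 hJ)) (group_ring_iso_coef_sub iso)).
have G1 := unit_subgroup1 (inD_unit_subgroup AG).
have j1 : j (gone gK) = 1 by case: iso => _ _ [].
have jkJ : j k \in image_pred j predT by apply/image_predP; exists k.
have jkA : j k \in A := group_ring_iso_basis_sub iso jkJ.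
have jkG : j k \in G by rewrite -JG_G; apply: mul_pred_subl G1 _ jkJ.
by apply: (group_ring_iso_inj iso); rewrite j1 (inD_eq1 AG jkA jkG).
Qed.

Section SubringType.
Variables (R : comNzRingType) (B : pred R) (hB : GRing.subring_closed B).

(* The [let] makes the key depend on [hB], so the instance below can be canonical. *)
Definition subring_key : {pred R} := let _ := hB in B.
HB.instance Definition _ := GRing.isSubringClosed.Build R subring_key hB.
Definition subring_type := {x : R | x \in subring_key}.
HB.instance Definition _ := [isSub of subring_type for @sval R (fun x => x \in subring_key)].
HB.instance Definition _ := [Choice of subring_type by <:].
HB.instance Definition _ := [SubChoice_isSubComNzRing of subring_type by <:].
Definition subring_val : {rmorphism subring_type -> R} := val.

Lemma subring_val_in b : subring_val b \in B.
Proof. exact: valP b. Qed.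

Lemma subring_val_insubd x : x \in B -> subring_val (insubd 0 x) = x.
Proof. exact: insubdK. Qed.

End SubringType.

Section Augmentation.
Variables (R : comNzRingType) (A G : pred R) (AG : inD A G).

Lemma inD_decomp x : exists L, pairs_in A G L && (pair_sum L == x).
Proof. by have [L hL ->] := inD_spans AG (r := x) isT; exists L; rewrite hL eqxx. Qed.

(* The augmentation A[G] -> A, sum_g a_g g |-> sum_g a_g (well defined by
   [augment_funE]). *)
Definition augment_fun x := pair_coef predT (xchoose (inD_decomp x)).

Lemma augment_funE L : pairs_in A G L -> augment_fun (pair_sum L) = pair_coef predT L.
Proof.
move=> hL; have /andP[hM /eqP eM] := xchooseP (inD_decomp (pair_sum L)).
have := inD_coef predT AG (L := xchoose (inD_decomp (pair_sum L)) ++ pairs_opp L).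
rewrite pairs_in_cat hM (pairs_in_opp (inD_subring AG) hL) pair_sum_cat pair_sum_opp eM subrr.
by rewrite pair_coef_cat pair_coef_opp => /(_ isT erefl) /eqP; rewrite subr_eq0 => /eqP.
Qed.

Lemma augment_funB : {morph augment_fun : x y / x - y}.
Proof.
move=> x y; case: AG => hA _ _ _.
have [Lx hx ->] := inD_spans AG (r := x) isT; have [Ly hy ->] := inD_spans AG (r := y) isT.
rewrite -pair_sum_opp -pair_sum_cat !augment_funE ?pairs_in_cat ?hx ?pairs_in_opp //.
by rewrite pair_coef_cat pair_coef_opp.
Qed.

Lemma augment_fun1 : augment_fun 1 = 1.
Proof.
case: AG => hA [_ G1 _ _] _ _; have := augment_funE (L := [:: (1, 1)]).
by rewrite /pair_sum /pair_coef !big_seq1 mulr1 /pairs_in /= G1 subring_closed_one // => ->.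
Qed.

Lemma augment_funM : {morph augment_fun : x y / x * y}.
Proof.
move=> x y; case: AG => hA [_ _ GM _] _ _.
have [Lx hx ->] := inD_spans AG (r := x) isT; have [Ly hy ->] := inD_spans AG (r := y) isT.
set L := [seq (p.1 * q.1, p.2 * q.2) | p <- Lx, q <- Ly].
have hL : pairs_in A G L.
  apply/pairs_inP => _ /allpairsP[[p q] [pL qL ->]] /=.
  have [pA pG] := pairs_inP _ _ _ hx p pL; have [qA qG] := pairs_inP _ _ _ hy q qL.
  by split; [apply: (subring_closed_mul hA) | apply: GM].
have -> : pair_sum Lx * pair_sum Ly = pair_sum L.
  rewrite /pair_sum big_allpairs_dep mulr_suml; apply: eq_bigr => p _.
  by rewrite mulr_sumr; apply: eq_bigr => q _; rewrite mulrACA.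
rewrite !augment_funE // /pair_coef big_allpairs_dep mulr_suml; apply: eq_bigr => p _.
by rewrite mulr_sumr.
Qed.

HB.instance Definition _ := GRing.isZmodMorphism.Build R R augment_fun augment_funB.
HB.instance Definition _ :=
  GRing.isMonoidMorphism.Build R R augment_fun (augment_fun1, augment_funM).

Definition augment : {rmorphism R -> R} := augment_fun.

Lemma augmentE L : pairs_in A G L -> augment (pair_sum L) = pair_coef predT L.
Proof. exact: augment_funE. Qed.

Lemma augment_in x : augment x \in A.
Proof.
have [L hL ->] := inD_spans AG (r := x) isT.
by rewrite augmentE //; apply: pair_coef_in (inD_subring AG) hL.
Qed.

Lemma augment_id a : a \in A -> augment a = a.
Proof.
case: AG => _ [_ G1 _ _] _ _ aA; have := augmentE (L := [:: (a, 1)]).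
by rewrite /pair_sum /pair_coef !big_seq1 mulr1 /pairs_in /= aA G1 => ->.
Qed.

Lemma augment_unit u : u \in G -> augment u = 1.
Proof.
case: AG => hA _ _ _ uG; have := augmentE (L := [:: (1, u)]).
by rewrite /pair_sum /pair_coef !big_seq1 mul1r /pairs_in /= uG subring_closed_one // => ->.
Qed.

End Augmentation.

Section AugmentationKernel.
Variables (R : comNzRingType) (A G B H : pred R).
Hypotheses (AG : inD A G) (BH : inD B H) (GH : {subset G <= H}).

Lemma augment_split M : pairs_in A G M -> exists2 Q, pairs_in B H Q &
  pair_sum Q = pair_sum M - pair_coef predT M /\
  forall C, coset_closed G C -> pair_coef C Q = 0.
Proof.
have hB := inD_subring BH; have HM := unit_subgroupM (inD_unit_subgroup BH).
elim: M => [|[a u] M IH].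
  by exists [::] => //; split=> [|C _]; rewrite /pair_sum /pair_coef !big_nil ?subr0.
rewrite pairs_in_cons => /and3P[/= aA uG /IH[Q hQ [eQ CQ]]].
have [N hN ea] := inD_spans BH (r := a) isT.
exists (pairs_mulr N u ++ pairs_opp N ++ Q).
  rewrite !pairs_in_cat hQ pairs_in_opp //= andbT; apply/pairs_inP => _ /mapP[p pN ->] /=.
  by have [pB pH] := pairs_inP _ _ _ hN p pN; split=> //; apply: HM => //; apply: GH.
split.
  rewrite !pair_sum_cat pair_sum_mulr pair_sum_opp eQ -ea pair_sum_cons.
  by rewrite /pair_coef big_cons /= addrA opprD addrACA.
move=> C hC; rewrite !pair_coef_cat pair_coef_mulr pair_coef_opp CQ // addr0.
by rewrite [X in X - _](eq_bigl (fun p => C p.2)) ?subrr // => p; rewrite /= hC.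
Qed.

Lemma augment_kernel_coef P C : pairs_in B H P -> augment AG (pair_sum P) = 0 ->
  coset_closed G C -> pair_coef C P = 0.
Proof.
move=> hP augP hC; have [M hM eM] := inD_spans AG (r := pair_sum P) isT.
have [Q hQ [eQ CQ]] := augment_split hM.
have := inD_coef C BH (L := P ++ pairs_opp Q).
rewrite pairs_in_cat hP (pairs_in_opp (inD_subring BH) hQ).
rewrite pair_sum_cat pair_sum_opp eQ -(augmentE AG hM) -eM augP subr0 subrr.
by rewrite pair_coef_cat pair_coef_opp CQ // subr0 => /(_ isT erefl).
Qed.

Lemma augment_eq1 h : h \in H -> augment AG h = 1 -> h \in G.
Proof.
move=> hH augh; apply/negPn/negP => hG.
have hB := inD_subring BH; have hB1 := subring_closed_one hB.
have hP : pairs_in B H [:: (1, h); (-1, 1)].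
  rewrite /pairs_in /= hB1 hH (subring_closed_opp hB hB1).
  by rewrite (unit_subgroup1 (inD_unit_subgroup BH)).
have augP : augment AG (pair_sum [:: (1, h); (-1, 1)]) = 0.
  by rewrite /pair_sum big_cons big_seq1 /= mul1r mulN1r rmorphB augh rmorph1 subrr.
have := augment_kernel_coef hP augP (unit_subgroup_coset_closed (inD_unit_subgroup AG)).
rewrite /pair_coef !big_cons big_nil /= (negbTE hG) (unit_subgroup1 (inD_unit_subgroup AG)).
by rewrite addr0 => /eqP; rewrite oppr_eq0 oner_eq0.
Qed.

End AugmentationKernel.

Section AugmentationImage.
Variables (R : comNzRingType) (A G B H : pred R).
Hypotheses (AG : inD A G) (BH : inD B H) (GH : {subset G <= H}) (BA : {subset B <= A}).

Let hB := inD_subring BH.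
Let hK := image_pred_unit_subgroup (augment AG) (inD_unit_subgroup BH).
Let K := unit_sub (image_pred (augment AG) H).

Lemma augment_image_spans t : t \in A -> exists (l : seq K) (c : K -> subring_type hB),
  t = \sum_(k <- l) subring_val hB (c k) * val k.
Proof.
move=> tA; have [L hL eL] := inD_spans BH (r := t) isT.
pose key (p : R * R) : K := insubd (unit_sub_one hK) (augment AG p.2).
exists (undup (map key L)), (fun k => \sum_(p <- L | key p == k) insubd 0 p.1).
rewrite -(augment_id AG tA) eL /pair_sum rmorph_sum (big_undup_partition key).
apply: eq_bigr => k _; rewrite rmorph_sum mulr_suml big_seq_cond [RHS]big_seq_cond.
apply: eq_bigr => p /andP[pL /eqP <-]; have [pB pH] := pairs_inP _ _ _ hL p pL.
rewrite rmorphM augment_id ?BA // subring_val_insubd // insubdK //.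
by apply/image_predP; exists p.2.
Qed.

Lemma augment_image_indep (l : seq K) (c : K -> subring_type hB) : List.NoDup l ->
  \sum_(k <- l) subring_val hB (c k) * val k = 0 -> forall k, List.In k l -> c k = 0.
Proof.
move=> /NoDupP ul sum0 k0 /InP k0l.
have rep (k : K) : exists h, (h \in H) && (val k == augment AG h).
  by have /image_predP[h hH ->] := unit_sub_valP k; exists h; rewrite hH eqxx.
pose hrep (k : K) := xchoose (rep k).
have hrepH (k : K) : hrep k \in H by case/andP: (xchooseP (rep k)).
have hrepE (k : K) : augment AG (hrep k) = val k by case/andP: (xchooseP (rep k)) => _ /eqP.
set P := [seq (subring_val hB (c k), hrep k) | k <- l].
have hP : pairs_in B H P.
  by apply/pairs_inP => _ /mapP[k _ ->]; split; [exact: subring_val_in | exact: hrepH].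
have augP : augment AG (pair_sum P) = 0.
  rewrite /pair_sum big_map rmorph_sum -[RHS]sum0; apply: eq_bigr => k _.
  by rewrite rmorphM augment_id ?BA ?subring_val_in // hrepE.
have hC : coset_closed G (fun h => augment AG h == val k0).
  by move=> h u uG; rewrite rmorphM (augment_unit AG uG) mulr1.
have := augment_kernel_coef BH GH hP augP hC.
rewrite /pair_coef big_map (eq_bigl (pred1 k0)); last first.
  by move=> k; rewrite /= hrepE (inj_eq val_inj).
by rewrite big_pred1_uniq // => ck0; apply: val_inj; exact: ck0.
Qed.

Lemma augment_group_ring_iso :
  group_ring_iso A (unit_sub_group hK) (subring_val hB) val.
Proof.
split=> //.
- by move=> b; apply: BA; exact: subring_val_in.
- by move=> k; have /image_predP[h _ ->] := unit_sub_valP k; exact: augment_in.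
- exact: augment_image_spans.
- exact: augment_image_indep.
Qed.

Lemma stark_unit_subgroup_sub : stark_in A -> {subset H <= G}.
Proof.
move=> st h hH; apply: (augment_eq1 (AG := AG) BH GH hH); apply: contra_notP st => augh.
exists (subring_type hB), K, (unit_sub_group hK), (subring_val hB), val.
split; last exact: augment_group_ring_iso.
exists (insubd (unit_sub_one hK) (augment AG h)) => /(congr1 val).
by rewrite insubdK; [exact: augh | apply/image_predP; exists h].
Qed.

End AugmentationImage.

Theorem lemma5p14 (R : comNzRingType) (A G : pred R) (HAG : inD A G) :
  (maximalD A G -> stark_in A) /\
  (is_order R -> connected_ring R -> stark_in A -> maximalD A G).
Proof.
split; first exact: maximalD_stark.
move=> _ _ st; split=> // B H BH [GH BA].
have HG := stark_unit_subgroup_sub HAG BH GH BA st.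
split=> x; apply/idP/idP; [exact: BA | apply: (inD_ring_sub HAG BH HG BA) | exact: HG | exact: GH].
Qed.
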